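(* Let $r\ge1$, $\mathbf{m}\in\mathbb{N}^r$, $m=m_1+\cdots+m_r$, $\mathbf{f}\in\mathbb{C}^r$, $b,c\in\mathbb{C}$ with $(c-b-m)_m\ne0$. Define $$ P_m(x)=\frac{1}{(c-b-m)_m}\sum_{k=0}^m(b)_{k}(1-c+b)_{k}D_{k}(c-b-m-x)_{m-k},\qquad D_k=\frac{(-1)^k(\mathbf{f}-b)_{\mathbf{m}}}{k!}{}_{r+1}F_{r}\!\left(\begin{matrix}-k,1-\mathbf{f}+b\\1-\mathbf{f}+b-\mathbf{m}\end{matrix}\right), $$ and $$ Q(b,c,\mathbf{f},\mathbf{m};t)=\frac{1}{(c-b-m)_{m}}\sum_{k=0}^{m}(b)_k\,C_{k,r}\,(t)_{k}\,(c-b-m-t)_{m-k},\qquad C_{k,r}=\frac{(-1)^k}{k!}{}_{r+1}F_{r}\!\left(\begin{matrix}-k,\mathbf{f}+\mathbf{m}\\\mathbf{f}\end{matrix}\right). $$ Then $P_m(x)=(\mathbf{f})_{\mathbf{m}}\,Q(b,c,\mathbf{f},\mathbf{m};x)$ identically in $x$.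
   Context: $(a)_k=\Gamma(a+k)/\Gamma(a)$. For vectors: $(\mathbf{f})_{\mathbf{m}}=\prod_i(f_i)_{m_i}$, $\mathbf{f}+\alpha$, $\mathbf{f}+\mathbf{m}$ componentwise; a vector among hypergeometric parameters means its components are listed. ${}_pF_q(\mathbf{a};\mathbf{b})$ denotes the (terminating) generalized hypergeometric series evaluated at $1$. Parameters are assumed such that all expressions are defined. *)

From HB Require Import structures.
From mathcomp Require Import all_boot all_order all_algebra.
From mathcomp Require Import reals.
From mathcomp Require Export complex.
Set Implicit Arguments. Unset Strict Implicit. Unset Printing Implicit Defensive.
Import Order.TTheory GRing.Theory Num.Theory.
Local Open Scope ring_scope.

Definition poch {C : ringType} (a : C) (k : nat) : C :=
  \prod_(i < k) (a + i%:R).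

Definition pochv {C : ringType} {r : nat} (f : 'I_r -> C) (m : 'I_r -> nat) : C :=
  \prod_(i < r) poch (f i) (m i).

Definition hypF {C : fieldType} {r : nat} (k : nat) (a b : 'I_r -> C) : C :=
  \sum_(j < k.+1)
     poch (- (k%:R)) j * (\prod_(i < r) poch (a i) j)
       / ((\prod_(i < r) poch (b i) j) * (j`!)%:R).

Section Defs.
Variables (R : realType) (r : nat).
Local Notation C := (R[i]).
Variables (b c : C) (f : 'I_r -> C) (m : 'I_r -> nat).

Definition msum : nat := (\sum_(i < r) m i)%N.

Definition Dk (k : nat) : C :=
  (-1) ^+ k * pochv (fun i => f i - b) m / (k`!)%:R *
  hypF k (fun i => 1 - f i + b) (fun i => 1 - f i + b - (m i)%:R).

Definition Pm (x : C) : C :=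
  (poch (c - b - msum%:R) msum)^-1 *
  \sum_(k < msum.+1) poch b k * poch (1 - c + b) k * Dk k *
                      poch (c - b - msum%:R - x) (msum - k).

Definition Ck (k : nat) : C :=
  (-1) ^+ k / (k`!)%:R * hypF k (fun i => f i + (m i)%:R) f.

Definition Qfun (t : C) : C :=
  (poch (c - b - msum%:R) msum)^-1 *
  \sum_(k < msum.+1) poch b k * Ck k * poch t k *
                      poch (c - b - msum%:R - t) (msum - k).
End Defs.

From HB Require Import structures.
From mathcomp Require Import all_boot all_order all_algebra.
From mathcomp Require Import reals complex.
From mathcomp Require Import ring.
Set Implicit Arguments.
Unset Strict Implicit.
Unset Printing Implicit Defensive.

Import Order.TTheory GRing.Theory Num.Theory.
Local Open Scope ring_scope.

(* Put G(y) = prod_i (f_i + y)_(m_i), a polynomial of degree m.  Term by term in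
   the terminating r+1Fr series, (f)_m C_(k,r) and D_k are the k-th forward
   differences at 0 of j |-> G(j) and of j |-> G(-b-j), divided by k!.  Both sides
   of the identity are therefore linear in G, so it suffices to take for G a falling
   factorial y(y-1)...(y-n+1) with n <= m.  Its k-th difference at 0 is n! [k = n],
   which collapses the Q-side to (b)_n (x)_n (c-b-m-x)_(m-n).  On the P-side,
   (-b-j)(-b-j-1)...(-b-j-n+1) = (-1)^n (b+j)_n has k-th difference
   (-1)^n n(n-1)...(n-k+1) (b+k)_(n-k), and the remaining sum over k is a
   Chu-Vandermonde sum with the same value. *)

Section Pochhammer.
Context {C : comNzRingType}.
Implicit Types (a u : C) (n p q j k : nat).

Lemma poch0 a : poch a 0 = 1.
Proof. by rewrite /poch big_ord0. Qed.

Lemma pochS a n : poch a n.+1 = poch a n * (a + n%:R).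
Proof. by rewrite /poch big_ord_recr. Qed.

Lemma pochSl a n : poch a n.+1 = a * poch (a + 1) n.
Proof.
rewrite /poch big_ord_recl /= addr0; congr (_ * _).
by apply: eq_bigr => i _; rewrite /bump /= -natr1; ring.
Qed.

Lemma pochD a p q : poch a (p + q) = poch a p * poch (a + p%:R) q.
Proof.
elim: q => [|q IHq]; first by rewrite addn0 poch0 mulr1.
by rewrite addnS !pochS IHq natrD mulrA addrA.
Qed.

Lemma poch_reflect a n : poch a n = (-1) ^+ n * poch (1 - a - n%:R) n.
Proof.
elim: n a => [|n IHn] a; first by rewrite !poch0 mulr1.
rewrite pochS pochSl IHn exprS -natr1.
have -> : 1 - a - (n%:R + 1) + 1 = 1 - a - n%:R by ring.
ring.
Qed.

Lemma poch_opp_nat k j : poch (- k%:R : C) j = (-1) ^+ j * (k ^_ j)%:R.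
Proof.
elim: j => [|j IHj]; first by rewrite poch0 mulr1.
rewrite pochS IHj ffactnSr natrM exprS.
have [le_jk | lt_kj] := leqP j k; first by rewrite natrB //; ring.
by rewrite ffact_small // !(mul0r, mulr0).
Qed.

Lemma poch_mul_reflect u p j :
  poch u p * poch (1 - u) j = poch (1 - u - p%:R) j * poch (u - j%:R) p.
Proof.
rewrite [poch (1 - u) j]poch_reflect [poch (1 - u - p%:R) j]poch_reflect.
have -> : 1 - (1 - u) - j%:R = u - j%:R by ring.
have -> : 1 - (1 - u - p%:R) - j%:R = u - j%:R + p%:R by ring.
have := pochD (u - j%:R) j p; rewrite addnC pochD subrK => E.
transitivity ((-1) ^+ j * (poch (u - j%:R) j * poch u p)); first by ring.
by rewrite -E; ring.
Qed.

Lemma sum_binS n (F : nat -> C) :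
  \sum_(k < n.+2) 'C(n.+1, k)%:R * F k =
  \sum_(k < n.+1) 'C(n, k)%:R * (F k + F k.+1).
Proof.
have shift : \sum_(k < n.+1) 'C(n, k)%:R * F k =
    F 0%N + \sum_(k < n.+1) 'C(n, k.+1)%:R * F k.+1.
  by rewrite big_ord_recl [in RHS]big_ord_recr /= bin0 bin_small // mul1r mul0r addr0.
under [RHS]eq_bigr => k _ do rewrite mulrDr.
rewrite big_split /= shift big_ord_recl /= bin0 mul1r -addrA; congr (_ + _).
under eq_bigr => i _ do rewrite -[bump 0 i]/(i.+1) binS natrD mulrDl.
by rewrite big_split.
Qed.

Lemma sum_bin_widen n N (F : nat -> C) : (n < N)%N ->
  \sum_(k < N) 'C(n, k)%:R * F k = \sum_(k < n.+1) 'C(n, k)%:R * F k.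
Proof.
move=> lt_nN; rewrite [RHS](big_ord_widen N (fun k => 'C(n, k)%:R * F k) lt_nN).
rewrite [RHS]big_mkcond /=; apply: eq_bigr => k _.
by case: ltnP => // lt_nk; rewrite bin_small // mul0r.
Qed.

Lemma poch_vandermonde a u n :
  poch (a + u) n = \sum_(k < n.+1) 'C(n, k)%:R * (poch a k * poch u (n - k)).
Proof.
elim: n => [|n IHn]; first by rewrite big_ord1 subnn !poch0 !mul1r.
rewrite (sum_binS n (fun k => poch a k * poch u (n.+1 - k))) pochS IHn big_distrl /=.
apply: eq_bigr => -[k lt_kn] _ /=; rewrite subSS subSn // !pochS natrB //.
ring.
Qed.

End Pochhammer.

Section ForwardDifference.
Context {C : comNzRingType}.
Implicit Types (F G : nat -> C) (n k : nat).

Definition fdiff F k : C := \sum_(j < k.+1) (-1) ^+ (k + j) * 'C(k, j)%:R * F j.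

Lemma eq_fdiff F G k : (forall j, (j <= k)%N -> F j = G j) -> fdiff F k = fdiff G k.
Proof. by move=> eqFG; apply: eq_bigr => -[j lt_jk] _; rewrite eqFG. Qed.

Lemma fdiffS F k : fdiff F k.+1 = fdiff (fun j => F j.+1) k - fdiff F k.
Proof.
rewrite /fdiff.
under eq_bigr => j _ do rewrite mulrAC mulrC.
rewrite (sum_binS k (fun j => (-1) ^+ (k.+1 + j) * F j)).
under eq_bigr => j _ do rewrite mulrDr.
rewrite big_split /= addrC -sumrN; congr (_ + _); apply: eq_bigr => j _.
  by rewrite addnS !exprS; ring.
by rewrite addSn exprS; ring.
Qed.

Lemma fdiffZ (c : C) F k : fdiff (fun j => c * F j) k = c * fdiff F k.
Proof. by rewrite /fdiff big_distrr; apply: eq_bigr => j _; rewrite mulrCA. Qed.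

Lemma fdiff_sum N (a : nat -> C) (F : nat -> nat -> C) k :
  fdiff (fun j => \sum_(n < N) a n * F n j) k = \sum_(n < N) a n * fdiff (F n) k.
Proof.
rewrite /fdiff; under eq_bigr => j _ do rewrite big_distrr.
rewrite exchange_big; apply: eq_bigr => n _; rewrite big_distrr.
by apply: eq_bigr => j _ /=; rewrite mulrCA.
Qed.

Lemma fdiff_poch (a : C) n k :
  fdiff (fun j => poch (a + j%:R) n) k = (n ^_ k)%:R * poch (a + k%:R) (n - k).
Proof.
elim: k a => [|k IHk] a.
  by rewrite /fdiff big_ord1 ffactn0 subn0 !mul1r.
rewrite fdiffS (@eq_fdiff _ (fun j => poch (a + 1 + j%:R) n)); last first.
  by move=> j _; rewrite -natr1 addrA addrAC.
rewrite !IHk ffactnSr natrM.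
have [le_nk | lt_kn] := leqP n k.
  have nk0 : (n - k = 0)%N by apply/eqP; rewrite subn_eq0.
  by rewrite nk0 !poch0 subrr mulr0 mul0r.
rewrite -(subnSK lt_kn) pochS pochSl.
have p_eq : (n - k.+1)%N%:R = n%:R - k%:R - 1 :> C.
  by rewrite natrB // -natr1 opprD addrA.
move: (n - k.+1)%N p_eq => p p_eq.
rewrite -!natr1 p_eq [a + 1 + k%:R]addrAC [a + (k%:R + 1)]addrA; ring.
Qed.

Lemma sum_fdiff_expansion N (a : nat -> C) (B : nat -> nat -> C) (F : nat -> C) :
  (forall j, F j = \sum_(n < N) a n * B n j) -> forall K (w : 'I_K -> C),
  \sum_(k < K) w k * fdiff F k = \sum_(n < N) a n * \sum_(k < K) w k * fdiff (B n) k.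
Proof.
move=> expF K w.
under eq_bigr => k _ do rewrite (eq_fdiff (fun j _ => expF j)) fdiff_sum big_distrr.
rewrite exchange_big; apply: eq_bigr => n _; rewrite big_distrr.
by apply: eq_bigr => k _ /=; rewrite mulrCA.
Qed.

End ForwardDifference.

Section FallingFactorial.
Context {C : comNzRingType}.
Implicit Types (G : C -> C) (y s : C) (d n k p : nat).

Definition falling n y : C := poch (y - n%:R + 1) n.

Lemma fallingS n y : falling n.+1 y = (y - n%:R) * falling n y.
Proof. by rewrite /falling pochSl -natr1; congr (_ * poch _ _); ring. Qed.

Lemma fdiff_falling_nat n k : fdiff (fun j => falling n j%:R) k = ((k == n) * n`!)%:R.
Proof.
rewrite (@eq_fdiff _ _ (fun j => poch (1 - n%:R + j%:R) n)); last first.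
  by move=> j _; rewrite /falling; congr poch; ring.
rewrite fdiff_poch; have [lt_kn | lt_nk | ->] := ltngtP k n.
- have vanish : 1 - n%:R + k%:R + (n - k.+1)%:R = 0 :> C.
    by rewrite natrB // -natr1; ring.
  by rewrite -(subnSK lt_kn) pochS vanish mulr0 mulr0 mul0n.
- by rewrite ffact_small // mul0r mul0n.
- by rewrite ffactnn subnn poch0 mul1n mulr1.
Qed.

Definition falling_expansion d G :=
  exists a : nat -> C, forall y, G y = \sum_(n < d.+1) a n * falling n y.

Lemma eq_falling_expansion d G G' :
  G =1 G' -> falling_expansion d G -> falling_expansion d G'.
Proof. by move=> eqG [a expG]; exists a => y; rewrite -eqG. Qed.

Lemma falling_expansionMX d G s :
  falling_expansion d G -> falling_expansion d.+1 (fun y => G y * (y + s)).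
Proof.
move=> [a expG].
(* (y + s) * falling n y = falling n.+1 y + (n + s) * falling n y *)
exists (fun n => (if n is n'.+1 then a n' else 0) +
                 (if (n < d.+1)%N then (n%:R + s) * a n else 0)) => y.
under eq_bigr => n _ do rewrite mulrDl.
rewrite big_split /= big_ord_recl /= mul0r add0r.
rewrite [X in _ = _ + X]big_ord_recr /= ltnn mul0r addr0.
rewrite expG big_distrl -big_split /=.
by apply: eq_bigr => -[n lt_nd] _ /=; rewrite lt_nd fallingS; ring.
Qed.

Lemma falling_expansion_poch d G s p :
  falling_expansion d G -> falling_expansion (d + p) (fun y => G y * poch (s + y) p).
Proof.
move=> expG; elim: p => [|p IHp].
  by rewrite addn0; apply: eq_falling_expansion expG => y; rewrite poch0 mulr1.
rewrite addnS; apply: eq_falling_expansion (falling_expansionMX (s + p%:R) IHp).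
by move=> y /=; rewrite pochS; ring.
Qed.

Lemma falling_expansion_prod (I : Type) (r : seq I) (f : I -> C) (m : I -> nat) :
  falling_expansion (\sum_(i <- r) m i) (fun y => \prod_(i <- r) poch (f i + y) (m i)).
Proof.
elim: r => [|i r IHr].
  by exists (fun _ => 1) => y; rewrite !big_nil big_ord1 /falling poch0 mulr1.
rewrite big_cons addnC.
apply: eq_falling_expansion (falling_expansion_poch (f i) (m i) IHr) => y /=.
by rewrite big_cons mulrC.
Qed.

End FallingFactorial.

Section CharZeroIdentities.
Context {C : numFieldType}.

Lemma fact_neq0 k : (k`!)%:R != 0 :> C.
Proof. by rewrite pnatr_eq0 -lt0n fact_gt0. Qed.

Lemma sum_fdiff_falling_nat K (w : 'I_K -> C) (n : 'I_K) :
  \sum_(k < K) w k / (k`!)%:R * fdiff (fun j => falling n j%:R) k = w n.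
Proof.
under eq_bigr => k _ do rewrite fdiff_falling_nat.
rewrite (bigD1 n) //= eqxx mul1n divfK ?fact_neq0 // big1 ?addr0 //.
by move=> k; rewrite -val_eqE /= => /negbTE ->; rewrite mul0n mulr0.
Qed.

Lemma sum_fdiff_falling_opp (b c x : C) M n : (n <= M)%N ->
  \sum_(k < M.+1) poch b k * poch (1 - c + b) k * poch (c - b - M%:R - x) (M - k)
                  / (k`!)%:R * fdiff (fun j => falling n (- b - j%:R)) k
  = poch b n * poch x n * poch (c - b - M%:R - x) (M - n).
Proof.
move=> le_nM; set A := c - b - M%:R - x.
have falling_opp j : falling n (- b - j%:R) = (-1) ^+ n * poch (b + j%:R) n.
  rewrite [poch _ n]poch_reflect mulrA -exprMn mulrNN mulr1 expr1n mul1r /falling.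
  by congr poch; ring.
have term k :
    poch b k * poch (1 - c + b) k * poch A (M - k) / (k`!)%:R
      * fdiff (fun j => falling n (- b - j%:R)) k =
    (-1) ^+ n * poch b n * poch A (M - n)
      * ('C(n, k)%:R * (poch (1 - c + b) k * poch (A + (M - n)%:R) (n - k))).
  rewrite (eq_fdiff (fun j _ => falling_opp j)) fdiffZ fdiff_poch.
  have [lt_nk | le_kn] := ltnP n k.
    by rewrite ffact_small // bin_small // !(mul0r, mulr0).
  have split_b : poch b n = poch b k * poch (b + k%:R) (n - k).
    by rewrite -pochD subnKC.
  have split_A : poch A (M - k) = poch A (M - n) * poch (A + (M - n)%:R) (n - k).
    by rewrite -pochD addnBA // subnK.
  rewrite -bin_ffact natrM split_b split_A.
  by field; rewrite fact_neq0.
under eq_bigr => k _ do rewrite term.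
rewrite -big_distrr /= (@sum_bin_widen _ n M.+1
  (fun k => poch (1 - c + b) k * poch (A + (M - n)%:R) (n - k)) le_nM).
rewrite -poch_vandermonde [poch x n]poch_reflect.
have -> : 1 - c + b + (A + (M - n)%:R) = 1 - x - n%:R by rewrite /A natrB //; ring.
by ring.
Qed.

Lemma sum_fdiff_reflect (b c x : C) M G : falling_expansion M G ->
  \sum_(k < M.+1) poch b k * poch (1 - c + b) k * poch (c - b - M%:R - x) (M - k)
                  / (k`!)%:R * fdiff (fun j => G (- b - j%:R)) k
  = \sum_(k < M.+1) poch b k * poch x k * poch (c - b - M%:R - x) (M - k)
                  / (k`!)%:R * fdiff (fun j => G j%:R) k.
Proof.
move=> [a expG].
rewrite (sum_fdiff_expansion (B := fun n j => falling n (- b - j%:R)) (fun j => expG _)).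
rewrite (sum_fdiff_expansion (B := fun n j => falling n j%:R) (fun j => expG _)).
apply: eq_bigr => n _; congr (_ * _).
by rewrite sum_fdiff_falling_nat sum_fdiff_falling_opp // -ltnS.
Qed.

Lemma hypF_fdiff r k (a b : 'I_r -> C) (c : C) (g : nat -> C) :
  (forall j, (j <= k)%N -> \prod_(i < r) poch (b i) j != 0 /\
     c * \prod_(i < r) poch (a i) j = \prod_(i < r) poch (b i) j * g j) ->
  (-1) ^+ k * c * hypF k a b = fdiff g k.
Proof.
move=> hyp; rewrite /hypF /fdiff !big_distrr; apply: eq_bigr => -[j lt_jk] _ /=.
have [nz_b eq_g] := hyp j lt_jk.
rewrite poch_opp_nat -bin_ffact natrM exprD -[g j](mulKf nz_b) -eq_g.
by field; rewrite nz_b fact_neq0.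
Qed.

End CharZeroIdentities.

Section Coefficients.
Variables (R : realType) (r : nat) (b : R[i]) (f : 'I_r -> R[i]) (m : 'I_r -> nat).

Lemma Dk_fdiff k :
  (forall i j, (j <= k)%N -> poch (1 - f i + b - (m i)%:R) j != 0) ->
  Dk b f m k =
    fdiff (fun j => \prod_(i < r) poch (f i + (- b - j%:R)) (m i)) k / (k`!)%:R.
Proof.
move=> nz_den; rewrite /Dk -(@hypF_fdiff _ _ k (fun i => 1 - f i + b)
  (fun i => 1 - f i + b - (m i)%:R) (pochv (fun i => f i - b) m)).
  by ring.
move=> j le_jk; split; first by rewrite prodf_seq_neq0; apply/allP => i _; exact: nz_den.
rewrite /pochv -!big_split /=; apply: eq_bigr => i _.
have -> : 1 - f i + b = 1 - (f i - b) by ring.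
have -> : f i + (- b - j%:R) = f i - b - j%:R by ring.
exact: poch_mul_reflect.
Qed.

Lemma pochv_Ck_fdiff k :
  (forall i j, (j <= k)%N -> poch (f i) j != 0) ->
  pochv f m * Ck f m k =
    fdiff (fun j => \prod_(i < r) poch (f i + j%:R) (m i)) k / (k`!)%:R.
Proof.
move=> nz_den; rewrite /Ck -(@hypF_fdiff _ _ k (fun i => f i + (m i)%:R) f (pochv f m)).
  by ring.
move=> j le_jk; split; first by rewrite prodf_seq_neq0; apply/allP => i _; exact: nz_den.
by rewrite /pochv -!big_split /=; apply: eq_bigr => i _; rewrite -!pochD addnC.
Qed.

End Coefficients.

Theorem lemma2 (R : realType) (r : nat) (m : 'I_r -> nat) (f : 'I_r -> R[i])
  (b c : R[i]) :
  (1 <= r)%N ->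
  poch (c - b - (msum m)%:R) (msum m) != 0 ->
  (* standing assumption: all hypergeometric denominators are defined *)
  (forall (i : 'I_r) (j : nat), (j <= msum m)%N ->
     poch (1 - f i + b - (m i)%:R) j != 0 /\ poch (f i) j != 0) ->
  forall x : R[i], Pm b c f m x = pochv f m * Qfun b c f m x.
Proof.
move=> _ _ nz_den x; set M := msum m; set A := c - b - M%:R - x.
have nz_den_le k : (k <= M)%N -> forall i j, (j <= k)%N ->
    poch (1 - f i + b - (m i)%:R) j != 0 /\ poch (f i) j != 0.
  by move=> le_kM i j le_jk; apply/nz_den/(leq_trans le_jk le_kM).
rewrite /Pm /Qfun mulrCA; congr (_ * _); rewrite big_distrr /=.
transitivity (\sum_(k < M.+1) poch b k * poch (1 - c + b) k * poch A (M - k) / (k`!)%:R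
    * fdiff (fun j => \prod_(i < r) poch (f i + (- b - j%:R)) (m i)) k).
  apply: eq_bigr => -[k le_kM] _ /=; rewrite Dk_fdiff; first by ring.
  by move=> i j /(nz_den_le k le_kM i j) [].
rewrite (sum_fdiff_reflect _ _ _ (falling_expansion_prod _ f m)).
apply: eq_bigr => -[k le_kM] _ /=.
rewrite mulrAC -mulrA -pochv_Ck_fdiff; first by ring.
by move=> i j /(nz_den_le k le_kM i j) [].
Qed.
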